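(* Let $d\in\mathbb N$, $H>0$, $\eta>0$, let $R(x)=\sum_{a\in[d]}\log\frac1{x(a)}$ be the log-barrier on $\Delta_d$, let $x'\in\Delta_d$ have all coordinates positive, let $\ell\in\mathbb R^d$ with $\|\ell\|_\infty\le H$, define $F(x)=\eta\langle x,\ell\rangle+D_R(x,x')$ and $x^+=\arg\min_{x\in\Delta_d}F(x)$. If $\eta\le\frac1{8H}$, then for every $a\in[d]$, $$(1-8\eta\|\ell\|_\infty)x'(a)\le x^+(a)\le(1+8\eta\|\ell\|_\infty)x'(a).$$
   Context: $D_R(x,y)=\sum_a\big(\log\frac{y(a)}{x(a)}+\frac{x(a)-y(a)}{y(a)}\big)$ is the Bregman divergence of the log-barrier. *)

From mathcomp Require Import all_boot all_order all_algebra.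
From mathcomp Require Import reals exp.
Set Implicit Arguments. Unset Strict Implicit. Unset Printing Implicit Defensive.
Import Order.TTheory GRing.Theory Num.Theory.
Local Open Scope ring_scope.

Definition in_simplex (R : realType) (d : nat) (x : 'I_d -> R) : Prop :=
  (forall a, 0 <= x a) /\ \sum_(a < d) x a = 1.

Definition in_simplex_pos (R : realType) (d : nat) (x : 'I_d -> R) : Prop :=
  (forall a, 0 < x a) /\ \sum_(a < d) x a = 1.

Definition logbarrier (R : realType) (d : nat) (x : 'I_d -> R) : R :=
  \sum_(a < d) ln (1 / x a).

Definition bregman_lb (R : realType) (d : nat) (x y : 'I_d -> R) : R :=
  \sum_(a < d) (ln (y a / x a) + (x a - y a) / y a).

Definition linf (R : realType) (d : nat) (l : 'I_d -> R) : R :=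
  \big[Num.max/0]_(a < d) `|l a|.

Definition dotp (R : realType) (d : nat) (x y : 'I_d -> R) : R :=
  \sum_(a < d) x a * y a.

Definition Fobj (R : realType) (d : nat) (eta : R) (l x' x : 'I_d -> R) : R :=
  eta * dotp x l + bregman_lb x x'.

(* x^+ = argmin_{x in Delta_d} F(x).  F is +oo on the boundary of the simplex
   (log(x'(a)/0) = +oo), so the minimizer lies in the relative interior and
   minimizes F among interior points. *)
Definition is_argmin_F (R : realType) (d : nat) (eta : R) (l x' xp : 'I_d -> R)
  : Prop :=
  in_simplex_pos xp /\
  forall x, in_simplex_pos x -> Fobj eta l x' xp <= Fobj eta l x' x.

From mathcomp Require Import all_boot all_order all_algebra.
From mathcomp Require Import reals exp.
From mathcomp Require Import ring lra.
Import Order.TTheory GRing.Theory Num.Theory.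
Set Implicit Arguments. Unset Strict Implicit.
Local Open Scope ring_scope.

(* Moving a small mass t from one coordinate of x^+ to another and letting
   t -> 0 gives the first-order condition 1/x^+(i) = 1/x'(i) + eta l(i) + nu
   with a single multiplier nu.  As x^+ and x' both sum to 1, some coordinate
   of x^+ is below and some above that of x', which forces
   |nu| <= eta ||l||_oo.  Hence x^+(a) = x'(a) / (1 + x'(a) u) with
   |u| <= 2 eta ||l||_oo <= 1/4, and the bounds follow. *)

Section LogBarrierStability.
Variable R : realType.

Lemma ln_div_le (y z : R) : 0 < y -> 0 < z -> ln (y / z) <= (y - z) / z.
Proof.
move=> y0 z0; have q0 : 0 < y / z by exact: divr_gt0.
have -> : (y - z) / z = y / z - 1 by field; rewrite gt_eqF.
by have := @le_ln1Dx R (y / z - 1); rewrite [1 + _]addrC subrK; apply; lra.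
Qed.

Lemma ge0_of_forall_linear_slack (c K T : R) : 0 < T ->
  (forall t, 0 < t -> t < T -> 0 <= c + K * t) -> 0 <= c.
Proof.
move=> T0 slack; rewrite leNgt; apply/negP => c0.
have K1 : 0 < `|K| + 1 by have := normr_ge0 K; lra.
pose t := Num.min (T / 2) (- c / (`|K| + 1)).
have t0 : 0 < t by rewrite lt_min; apply/andP; split; apply: divr_gt0; lra.
have tT2 : t <= T / 2 by rewrite ge_min lexx.
have tT : t < T by lra.
have tc : (`|K| + 1) * t <= - c.
  by rewrite mulrC -ler_pdivlMr // ge_min lexx orbT.
have Kt : K * t <= `|K| * t by rewrite ler_wpM2r ?ler_norm // ltW.
have := slack t t0 tT; rewrite mulrDl mul1r in tc; lra.
Qed.

Lemma inv_shift_le (A B t : R) : 0 < B -> 0 < t -> 2 * t <= A ->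
  (A - t)^-1 - (B + t)^-1 <= A^-1 - B^-1 + (2 / A ^+ 2 + B ^- 2) * t.
Proof.
move=> B0 t0 tA; have A0 : 0 < A by lra.
have At : 0 < A - t by lra.
have Bt : 0 < B + t by lra.
have eA : (A - t)^-1 - A^-1 <= 2 / A ^+ 2 * t.
  rewrite -subr_ge0.
  have -> : 2 / A ^+ 2 * t - ((A - t)^-1 - A^-1) = t * (A - 2 * t) / (A ^+ 2 * (A - t)).
    by field; rewrite !gt_eqF.
  by apply: divr_ge0; apply: mulr_ge0; rewrite ?sqr_ge0 //; lra.
have eB : B^-1 - (B + t)^-1 <= B ^- 2 * t.
  rewrite -subr_ge0.
  have -> : B ^- 2 * t - (B^-1 - (B + t)^-1) = t ^+ 2 / (B ^+ 2 * (B + t)).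
    by field; rewrite !gt_eqF.
  by rewrite divr_ge0 ?sqr_ge0 // mulr_ge0 ?sqr_ge0 //; lra.
lra.
Qed.

Lemma exists_le_of_sum_eq (d : nat) (x y : 'I_d -> R) (i0 : 'I_d) :
  \sum_(i < d) x i = \sum_(i < d) y i -> exists i, x i <= y i.
Proof.
move=> xy; have [/existsP[i xiy]|/existsPn yx] := boolP [exists i, x i <= y i].
  by exists i.
have : \sum_(i < d) y i < \sum_(i < d) x i.
  by apply: ltr_sum => [|i _]; [apply/hasP; exists i0 | rewrite ltNge yx].
by rewrite xy ltxx.
Qed.

Lemma common_shift_bound (d : nat) (x y s : 'I_d -> R) (nu w : R) (i0 : 'I_d) :
  (forall i, 0 < x i) -> (forall i, 0 < y i) ->
  \sum_(i < d) x i = \sum_(i < d) y i ->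
  (forall i, `|s i| <= w) -> (forall i, (x i)^-1 = (y i)^-1 + s i + nu) ->
  `|nu| <= w.
Proof.
move=> x0 y0 xy sw shift; rewrite ler_norml.
have [i xiy] := exists_le_of_sum_eq i0 xy.
have [j yjx] := exists_le_of_sum_eq i0 (esym xy).
have := sw i; have := sw j; rewrite !ler_norml => /andP[sj1 sj2] /andP[si1 si2].
have : (y i)^-1 <= (x i)^-1 by rewrite lef_pV2 ?posrE.
have : (x j)^-1 <= (y j)^-1 by rewrite lef_pV2 ?posrE.
by rewrite !shift => *; apply/andP; split; lra.
Qed.

Lemma inv_perturb_bounds (p q u v : R) : 0 < p <= 1 -> 0 < q ->
  q^-1 = p^-1 + u -> `|u| <= v -> 2 * v <= 1 ->
  (1 - v) * p <= q <= (1 + 2 * v) * p.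
Proof.
move=> /andP[p0 p1] q0 quv uv v1.
have pq : p = q * (1 + p * u).
  have -> : 1 + p * u = p * q^-1 by rewrite quv; field; rewrite gt_eqF.
  by field; rewrite gt_eqF.
have : `|p * u| <= v.
  by rewrite normrM (gtr0_norm p0); apply: le_trans uv; rewrite ler_piMl.
rewrite ler_norml; move: (p * u) pq => r -> /andP[r1 r2].
have v0 : 0 <= v by lra.
(* (1 - v)(1 + r) <= 1 - v^2  and  (1 + 2v)(1 + r) >= 1 + v (1 - 2v). *)
have lo1 : 0 <= q * (1 - v) * (v - r) by rewrite !mulr_ge0 //; lra.
have lo2 : 0 <= q * v * v by rewrite !mulr_ge0 // ltW.
have hi1 : 0 <= q * (1 + 2 * v) * (r + v) by rewrite !mulr_ge0 //; lra.
have hi2 : 0 <= q * v * (1 - 2 * v) by rewrite !mulr_ge0 //; lra.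
by apply/andP; split; nra.
Qed.

Definition Fobj_coord (d : nat) (eta : R) (l x' : 'I_d -> R) (i : 'I_d) (z : R) :=
  eta * (z * l i) + (ln (x' i / z) + (z - x' i) / x' i).

Lemma Fobj_sum_coord (d : nat) (eta : R) (l x' x : 'I_d -> R) :
  Fobj eta l x' x = \sum_(i < d) Fobj_coord eta l x' i (x i).
Proof. by rewrite /Fobj /dotp /bregman_lb mulr_sumr -big_split. Qed.

(* The bracket is the derivative of [Fobj_coord] at [w]: this is convexity. *)
Lemma Fobj_coord_sub_le (d : nat) (eta : R) (l x' : 'I_d -> R) i (w z : R) :
  0 < x' i -> 0 < w -> 0 < z ->
  Fobj_coord eta l x' i w - Fobj_coord eta l x' i z
    <= (w - z) * (eta * l i + (x' i)^-1 - w^-1).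
Proof.
move=> x'0 w0 z0.
have lnzw : ln (x' i / w) - ln (x' i / z) <= (z - w) / w.
  rewrite !ln_div ?posrE //.
  have -> : ln (x' i) - ln w - (ln (x' i) - ln z) = ln z - ln w by ring.
  by rewrite -ln_div ?posrE //; apply: ln_div_le.
rewrite -subr_ge0 /Fobj_coord.
have -> : (w - z) * (eta * l i + (x' i)^-1 - w^-1)
  - (eta * (w * l i) + (ln (x' i / w) + (w - x' i) / x' i)
     - (eta * (z * l i) + (ln (x' i / z) + (z - x' i) / x' i)))
  = (z - w) / w - (ln (x' i / w) - ln (x' i / z)).
  by field; rewrite !gt_eqF.
by rewrite subr_ge0.
Qed.

Definition move_mass (d : nat) (x : 'I_d -> R) (a b : 'I_d) (t : R) (i : 'I_d) :=
  if i == a then x a - t else if i == b then x b + t else x i.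

Section MoveMass.
Variables (d : nat) (x : 'I_d -> R) (a b : 'I_d) (t : R).
Hypothesis ab : a != b.

Lemma move_mass_src : move_mass x a b t a = x a - t.
Proof. by rewrite /move_mass eqxx. Qed.

Lemma move_mass_dst : move_mass x a b t b = x b + t.
Proof. by rewrite /move_mass eq_sym (negbTE ab) eqxx. Qed.

Lemma sum_move_mass_sub (f : 'I_d -> R -> R) :
  \sum_(i < d) f i (move_mass x a b t i) - \sum_(i < d) f i (x i)
    = (f a (x a - t) - f a (x a)) + (f b (x b + t) - f b (x b)).
Proof.
rewrite -sumrB (bigD1 a) //= (bigD1 b) 1?eq_sym //= move_mass_src move_mass_dst.
rewrite big1 ?addr0 // => i /andP[ia ib].
by rewrite /move_mass (negbTE ia) (negbTE ib) subrr.
Qed.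

Lemma in_simplex_pos_move_mass :
  in_simplex_pos x -> 0 < t -> t < x a -> in_simplex_pos (move_mass x a b t).
Proof.
move=> [x0 x1] t0 ta; split.
  move=> i; rewrite /move_mass.
  by case: ifP => _; [rewrite subr_gt0 | case: ifP => _; rewrite ?addr_gt0].
apply/eqP; rewrite -subr_eq0 -x1 (sum_move_mass_sub (fun _ z => z)).
by apply/eqP; ring.
Qed.

End MoveMass.

Lemma argmin_Fobj_kkt (d : nat) (eta : R) (l x' xp : 'I_d -> R) (a b : 'I_d) :
  in_simplex_pos x' -> is_argmin_F eta l x' xp ->
  (xp b)^-1 - (x' b)^-1 - eta * l b <= (xp a)^-1 - (x' a)^-1 - eta * l a.
Proof.
move=> [x'0 _] [xpS xmin]; have [xp0 _] := xpS.
case: (eqVneq a b) => [-> // | ab]; rewrite -subr_ge0.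
set A := xp a; set B := xp b.
have A0 : 0 < A := xp0 a; have B0 : 0 < B := xp0 b.
apply: (@ge0_of_forall_linear_slack _ (2 / A ^+ 2 + B ^- 2) (A / 2)).
  exact: divr_gt0.
move=> t t0 tA; rewrite -(pmulr_rge0 _ t0).
have := xmin _ (in_simplex_pos_move_mass ab xpS t0 (ltac:(lra) : t < A)).
rewrite !Fobj_sum_coord -subr_ge0 sum_move_mass_sub // -/A -/B.
set ga := (A - t)^-1 - (x' a)^-1 - eta * l a.
set gb := (B + t)^-1 - (x' b)^-1 - eta * l b.
have Da : Fobj_coord eta l x' a (A - t) - Fobj_coord eta l x' a A <= t * ga.
  have := Fobj_coord_sub_le eta l (x'0 a) (ltac:(lra) : 0 < A - t) A0.
  by congr (_ <= _); rewrite /ga; ring.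
have Db : Fobj_coord eta l x' b (B + t) - Fobj_coord eta l x' b B <= - (t * gb).
  have := Fobj_coord_sub_le eta l (x'0 b) (ltac:(lra) : 0 < B + t) B0.
  by congr (_ <= _); rewrite /gb; ring.
have gap : ga - gb <= A^-1 - (x' a)^-1 - eta * l a - (B^-1 - (x' b)^-1 - eta * l b)
                      + (2 / A ^+ 2 + B ^- 2) * t.
  by have := inv_shift_le B0 t0 (ltac:(lra) : 2 * t <= A); rewrite /ga /gb; lra.
move=> gain; apply: le_trans (ler_wpM2l (ltW t0) gap).
by rewrite mulrBr; lra.
Qed.

Lemma ge0_linf (d : nat) (l : 'I_d -> R) : 0 <= linf l.
Proof. exact: bigmax_ge_id. Qed.

Lemma ler_linf (d : nat) (l : 'I_d -> R) i : `|l i| <= linf l.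
Proof. exact: le_bigmax. Qed.

Lemma le1_simplex_pos (d : nat) (x : 'I_d -> R) i : in_simplex_pos x -> x i <= 1.
Proof.
move=> [x0 <-]; rewrite (bigD1 i) //= lerDl.
by apply: sumr_ge0 => j _; exact: ltW.
Qed.

End LogBarrierStability.

Theorem lemma16 (R : realType) (d : nat) (H eta : R) (x' l xp : 'I_d -> R) :
  0 < H -> 0 < eta ->
  in_simplex_pos x' ->
  linf l <= H ->
  is_argmin_F eta l x' xp ->
  eta <= 1 / (8 * H) ->
  forall a : 'I_d,
    (1 - 8 * eta * linf l) * x' a <= xp a /\
    xp a <= (1 + 8 * eta * linf l) * x' a.
Proof.
move=> H0 eta0 x'S lH xpS etaH a.
have [[xp0 xp1] _] := xpS; have [x'0 x'1] := x'S.
pose nu := (xp a)^-1 - (x' a)^-1 - eta * l a.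
have kkt i : (xp i)^-1 = (x' i)^-1 + eta * l i + nu.
  have := argmin_Fobj_kkt a i x'S xpS; have := argmin_Fobj_kkt i a x'S xpS.
  rewrite /nu; lra.
have etal i : `|eta * l i| <= eta * linf l.
  by rewrite normrM (gtr0_norm eta0) ler_pM2l // ler_linf.
have nuL : `|nu| <= eta * linf l.
  by apply: (common_shift_bound a xp0 x'0 _ etal kkt); rewrite xp1 x'1.
have L0 := ge0_linf l.
have etaL : 8 * (eta * linf l) <= 1.
  move: etaH; rewrite ler_pdivlMr ?mulr_gt0 // => etaH.
  by have := ler_wpM2l (ltW eta0) lH; lra.
have p01 : 0 < x' a <= 1 by rewrite x'0 le1_simplex_pos.
have uv : `|eta * l a + nu| <= 2 * (eta * linf l).
  by apply: le_trans (ler_normD _ _) _; have := etal a; lra.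
have kkta : (xp a)^-1 = (x' a)^-1 + (eta * l a + nu) by rewrite addrA kkt.
have /andP[lo hi] := inv_perturb_bounds p01 (xp0 a) kkta uv ltac:(lra).
have v0 : 0 <= eta * linf l by rewrite mulr_ge0 // ltW.
rewrite -mulrA; have p0 := x'0 a.
split; [apply: le_trans lo | apply: le_trans hi _]; rewrite ler_pM2r //; lra.
Qed.
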